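(* There is an absolute constant $C$ such that for all positive integers $n$, $$M_{\mathrm{Schur}}(n,3)\le \frac{n^2}{67}+Cn \qquad\text{and}\qquad M_{\mathrm{Schur}}(n,4)\le \frac{n^2}{496}+Cn .$$ (The bound for 3 colors is attained, up to $O(n)$, by the coloring that colors consecutive blocks of $[n]$ of lengths $\frac{10n}{67},\frac{14n}{67},\frac{2n}{67},\frac{28n}{67},\frac{n}{67},\frac{11n}{67},\frac{n}{67}$ with colors $0,1,0,2,0,1,0$ respectively; the bound for 4 colors by consecutive blocks of lengths $\frac{e_i n}{496}$ with $(e_i)=(28,38,5,75,2,30,2,182,1,29,1,72,1,29,1)$ and colors $0,1,0,2,0,1,0,3,0,1,0,2,0,1,0$.)
   Context: For a positive integer $n$ write $[n]=\{1,\dots,n\}$. A $k$-coloring of $[n]$ is a map $\chi:[n]\to\{0,\dots,k-1\}$. A Schur triple is an ordered triple $(x,y,z)\in[n]^3$ with $x+y=z$ (so $(x,y,z)$ and $(y,x,z)$ with $x\neq y$ are counted separately); it is monochromatic if $\chi(x)=\chi(y)=\chi(z)$. $M_{\mathrm{Schur}}(n,k)$ is the minimum over all $k$-colorings of $[n]$ of the number of monochromatic Schur triples. *)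

From mathcomp Require Import all_boot all_order all_algebra.
Set Implicit Arguments. Unset Strict Implicit. Unset Printing Implicit Defensive.

(* A k-coloring of [n] = {1..n} is represented as chi : {ffun 'I_n -> 'I_k},
   where element x of [n] (1 <= x <= n) has color chi (x-1). *)

Definition col (n k : nat) (chi : {ffun 'I_n -> 'I_k}) (x : nat) : option 'I_k :=
  match insub x.-1 with
  | Some i => if 0 < x then Some (chi i) else None
  | None => None
  end.

Definition schur_count (n k : nat) (chi : {ffun 'I_n -> 'I_k}) : nat :=
  \sum_(1 <= x < n.+1) \sum_(1 <= y < n.+1)
     [&& x + y <= n, col chi x == col chi y & col chi y == col chi (x + y)].

(* The seed n*n of the
   fold is an upper bound for every schur_count (at most n*n pairs), so for
   k >= 1 (colorings exist) this is exactly the minimum. *)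
Definition M_Schur (n k : nat) : nat :=
  \big[minn/(n * n)]_(chi : {ffun 'I_n -> 'I_k}) schur_count chi.

From Pilot Require Import Defs.
From mathcomp Require Import all_boot all_order all_algebra.
Import Order.TTheory GRing.Theory Num.Theory.
From mathcomp Require Import zify ring lra.

Set Implicit Arguments.
Unset Strict Implicit.
Unset Printing Implicit Defensive.

(* Blow up a coloring c of {0, ..., m - 1} by a factor t: u gets the color
   c (u / t).  With 0-based points a Schur triple reads (u, v, u + v + 1);
   writing u = i t + a and v = j t + b, it lands on the triple (i, j, i + j + e)
   of the pattern, with carry e = (a + b + 1) / t in {0, 1}.  Carry 0 occurs
   for at most half of the t^2 pairs (a, b), so if the pattern has A
   monochromatic triples (i, j, i + j) and B <= A monochromatic triples
   (i, j, i + j + 1), the blow-up has at most (A + B) t^2 / 2 monochromatic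
   Schur triples.  The two patterns of the statement have A + B = 2m, giving
   m t^2 ~ n^2 / m for t ~ n / m. *)

Definition mono_pattern (m : nat) (c : nat -> nat) (e i j : nat) : bool :=
  [&& i + j + e < m, c i == c j & c j == c (i + j + e)].

Definition pattern_count (m : nat) (c : nat -> nat) (e : nat) : nat :=
  \sum_(0 <= i < m) \sum_(0 <= j < m) mono_pattern m c e i j.

Definition carry_count (t e : nat) : nat :=
  \sum_(0 <= a < t) \sum_(0 <= b < t) ((a + b + 1) %/ t == e).

Definition coloring (n k : nat) (c : nat -> nat) : {ffun 'I_n -> 'I_k.+1} :=
  [ffun u : 'I_n => inord (c u)].

Lemma M_Schur_le_schur_count n k (chi : {ffun 'I_n -> 'I_k}) :
  M_Schur n k <= schur_count chi.
Proof. by have := bigmin_le (n * n) chi (@schur_count n k); rewrite minEnat leEnat. Qed.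

Lemma col_coloring n k c u (lt_un : u < n) :
  Defs.col (coloring n k c) u.+1 = Some (inord (c u)).
Proof.
rewrite /Defs.col /=; case: insubP => [i _ val_i|]; last by rewrite lt_un.
by rewrite ffunE val_i.
Qed.

Lemma schur_count_coloring n k c : (forall u, c u <= k) ->
  schur_count (coloring n k c) = pattern_count n c 1.
Proof.
move=> c_le; rewrite /schur_count big_add1 /=; apply: eq_big_nat => u /andP[_ lt_un].
rewrite big_add1 /=; apply: eq_big_nat => v /andP[_ lt_vn].
have -> : u.+1 + v.+1 = (u + v + 1).+1 by lia.
rewrite /mono_pattern; have [lt_uvn|//] := ltnP (u + v + 1) n.
have inord_eq x y : x <= k -> y <= k -> (inord x == inord y :> 'I_k.+1) = (x == y).
  by move=> lexk leyk; rewrite -val_eqE /= !inordK ?ltnS.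
rewrite !col_coloring // !(inj_eq Some_inj) !inord_eq //.
Qed.

Lemma pattern_count_le m N c e : m <= N -> pattern_count m c e <= pattern_count N c e.
Proof.
move=> le_mN; rewrite /pattern_count (@big_cat_nat _ _ _ m 0 N) //=.
apply: (leq_trans _ (leq_addr _ _)).
rewrite big_nat [X in _ <= X]big_nat; apply: leq_sum => i _.
rewrite (@big_cat_nat _ _ _ m 0 N) //=; apply: (leq_trans _ (leq_addr _ _)).
rewrite big_nat [X in _ <= X]big_nat; apply: leq_sum => j _.
by rewrite /mono_pattern; case: ltnP => // lt_m; rewrite (leq_trans lt_m le_mN).
Qed.

Lemma sum_nat_blocks (F : nat -> nat) m t :
  \sum_(0 <= u < m * t) F u = \sum_(0 <= i < m) \sum_(0 <= a < t) F (i * t + a).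
Proof.
rewrite big_nat_mul; apply: eq_bigr => i _.
rewrite -{1}(add0n (i * t)) big_addn mulSn addnK.
by apply: eq_bigr => a _; rewrite addnC.
Qed.

Lemma mono_pattern_blowup m t c i j a b : a < t -> b < t ->
  mono_pattern (m * t) (fun u => c (u %/ t)) 1 (i * t + a) (j * t + b) =
  mono_pattern m c ((a + b + 1) %/ t) i j.
Proof.
move=> lt_at lt_bt; have t_gt0 : 0 < t by apply: leq_ltn_trans lt_at.
rewrite /mono_pattern.
have -> : i * t + a + (j * t + b) + 1 = (i + j) * t + (a + b + 1) by lia.
rewrite -ltn_divLR // !divnMDl // (divn_small lt_at) (divn_small lt_bt).
by rewrite !addn0.
Qed.

Lemma carry_lt2 t a b : a < t -> b < t -> (a + b + 1) %/ t < 2.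
Proof. by move=> lt_at lt_bt; rewrite ltn_divLR; lia. Qed.

Lemma mono_pattern_carry m c e i j : e < 2 ->
  mono_pattern m c e i j =
  mono_pattern m c 0 i j * (e == 0) + mono_pattern m c 1 i j * (e == 1) :> nat.
Proof. by case: e => [|[|]] // _; rewrite ?muln1 ?muln0 ?addn0. Qed.

Lemma pattern_count_blowup m t c :
  pattern_count (m * t) (fun u => c (u %/ t)) 1 =
  pattern_count m c 0 * carry_count t 0 + pattern_count m c 1 * carry_count t 1.
Proof.
rewrite /pattern_count sum_nat_blocks !big_distrl -big_split /=.
apply: eq_bigr => i _.
under eq_bigr do rewrite sum_nat_blocks.
rewrite exchange_big_nat !big_distrl -big_split /=.
apply: eq_bigr => j _.
rewrite /carry_count !big_distrr -big_split /=.
rewrite big_nat [RHS]big_nat; apply: eq_bigr => a /andP[_ lt_at].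
rewrite !big_distrr -big_split /=.
rewrite big_nat [RHS]big_nat; apply: eq_bigr => b /andP[_ lt_bt].
by rewrite mono_pattern_blowup // mono_pattern_carry ?carry_lt2.
Qed.

Lemma carry_countD t : carry_count t 0 + carry_count t 1 = t * t.
Proof.
rewrite /carry_count -big_split /= (@eq_big_nat _ _ _ 0 t _ (fun=> t)).
  by rewrite sum_nat_const_nat subn0.
move=> a /andP[_ lt_at]; rewrite -big_split /= (@eq_big_nat _ _ _ 0 t _ (fun=> 1)).
  by rewrite sum_nat_const_nat subn0 muln1.
by move=> b /andP[_ lt_bt]; have := carry_lt2 lt_at lt_bt; case: (_ %/ t) => [|[|]].
Qed.

Lemma carry_count0_le1 t : carry_count t 0 <= carry_count t 1.
Proof.
have [->|t_gt0] := posnP t; first by rewrite /carry_count big_geq.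
have div_eq0 x : (x %/ t == 0) = (x < t) by rewrite -leqn0 -ltnS ltn_divLR ?mul1n.
have div_eq1 x : (x %/ t == 1) = (t <= x < 2 * t).
  by rewrite eqn_leq -ltnS ltn_divLR // leq_divRL // mul1n andbC.
rewrite /carry_count big_nat_rev big_nat [X in _ <= X]big_nat.
apply: leq_sum => a /andP[_ lt_at].
rewrite big_nat_rev big_nat [X in _ <= X]big_nat.
apply: leq_sum => b /andP[_ lt_bt].
rewrite div_eq0 div_eq1; case: ltnP => //= ?.
by rewrite lt0b; apply/andP; split; lia.
Qed.

Lemma pattern_count_blowup_le m t c :
  pattern_count m c 1 <= pattern_count m c 0 ->
  pattern_count m c 0 + pattern_count m c 1 <= 2 * m ->
  pattern_count (m * t) (fun u => c (u %/ t)) 1 <= m * t * t.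
Proof.
move=> le_BA le_AB; rewrite pattern_count_blowup.
have := carry_count0_le1 t; have := carry_countD t.
move: le_BA le_AB; set A := pattern_count m c 0; set B := pattern_count m c 1.
set L := carry_count t 0; set L' := carry_count t 1 => le_BA le_AB sumL le_LL'.
(* Chebyshev: the larger pattern count meets the smaller carry count. *)
have : 2 * (A * L + B * L') <= (A + B) * (L + L') by nia.
by rewrite sumL; nia.
Qed.

Lemma M_Schur_le_pattern n m k c : 0 < m -> (forall i, c i <= k) ->
  pattern_count m c 1 <= pattern_count m c 0 ->
  pattern_count m c 0 + pattern_count m c 1 <= 2 * m ->
  M_Schur n k.+1 * m <= (n + m) ^ 2.
Proof.
move=> m_gt0 c_le le_BA le_AB; set t := n %/ m + 1.
have le_n_mt : n <= m * t by rewrite /t mulnC addn1 ltnW // ltn_ceil.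
have le_mt : m * t <= n + m by rewrite /t mulnDr muln1 leq_add2r mulnC leq_divM.
have le_M : M_Schur n k.+1 <= m * t * t.
  apply: leq_trans (M_Schur_le_schur_count (coloring n k (fun u => c (u %/ t)))) _.
  rewrite schur_count_coloring //; apply: leq_trans (pattern_count_le _ _ le_n_mt) _.
  exact: pattern_count_blowup_le.
have : (m * t) ^ 2 <= (n + m) ^ 2 by rewrite leq_exp2r.
nia.
Qed.

Section RealBound.
Local Open Scope ring_scope.

Lemma natr_le_sqr_div (R : realFieldType) (M n m C : nat) :
  (0 < m)%N -> (0 < n)%N -> (m + 2 <= C)%N -> (M * m <= (n + m) ^ 2)%N ->
  (M%:R : R) <= (n ^ 2)%:R / m%:R + C%:R * n%:R.
Proof.
move=> m_gt0 n_gt0 le_mC; rewrite -(ler_nat R) natrM natrX natrD natrX => le_Mm.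
have m_pos : (0 : R) < m%:R by rewrite ltr0n.
have n_ge1 : (1 : R) <= n%:R by rewrite ler1n.
have le_mC' : (m%:R : R) + 2 <= C%:R by rewrite -(natrD R m 2) ler_nat.
have le_M : (M%:R : R) <= (n%:R + m%:R) ^+ 2 / m%:R by rewrite ler_pdivlMr.
have sqr_div : (n%:R + m%:R) ^+ 2 / m%:R = n%:R ^+ 2 / m%:R + 2 * n%:R + m%:R :> R.
  by field; rewrite lt0r_neq0.
rewrite sqr_div in le_M; nra.
Qed.

End RealBound.

Definition block_pattern (blocks : seq (nat * nat)) : nat -> nat :=
  nth 0 (flatten [seq nseq b.1 b.2 | b <- blocks]).

Lemma block_pattern_le k blocks : all (fun b => b.2 <= k) blocks ->
  forall i, block_pattern blocks i <= k.
Proof.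
move=> /allP blocks_le i; rewrite /block_pattern.
set s := flatten _; have [lt_is|le_si] := ltnP i (size s); last by rewrite nth_default.
have /flatten_mapP[b b_in] := mem_nth 0 lt_is.
by rewrite mem_nseq => /andP[_ /eqP->]; apply: blocks_le.
Qed.

Definition pattern3 : nat -> nat :=
  block_pattern [:: (10, 0); (14, 1); (2, 0); (28, 2); (1, 0); (11, 1); (1, 0)].

Definition pattern4 : nat -> nat :=
  block_pattern [:: (28, 0); (38, 1); (5, 0); (75, 2); (2, 0); (30, 1); (2, 0); (182, 3);
                    (1, 0); (29, 1); (1, 0); (72, 2); (1, 0); (29, 1); (1, 0)].

Lemma pattern3_counts :
  pattern_count 67 pattern3 0 = 80 /\ pattern_count 67 pattern3 1 = 54.
Proof.
by split; rewrite /pattern_count unlock;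
  [vm_cast_no_check (erefl 80) | vm_cast_no_check (erefl 54)].
Qed.

Lemma pattern4_counts :
  pattern_count 496 pattern4 0 = 536 /\ pattern_count 496 pattern4 1 = 456.
Proof.
by split; rewrite /pattern_count unlock;
  [vm_cast_no_check (erefl 536) | vm_cast_no_check (erefl 456)].
Qed.

Local Open Scope ring_scope.

Theorem theorem7 :
  exists C : rat, forall n : nat, (0 < n)%N ->
    (M_Schur n 3)%:R <= (n ^ 2)%:R / 67%:R + C * n%:R /\
    (M_Schur n 4)%:R <= (n ^ 2)%:R / 496%:R + C * n%:R.
Proof.
have [count3_0 count3_1] := pattern3_counts.
have [count4_0 count4_1] := pattern4_counts.
exists 498%:R => n n_gt0; split; apply: natr_le_sqr_div => //.
- apply: (@M_Schur_le_pattern _ _ _ pattern3); rewrite ?count3_0 ?count3_1 //.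
  exact: block_pattern_le.
- apply: (@M_Schur_le_pattern _ _ _ pattern4); rewrite ?count4_0 ?count4_1 //.
  exact: block_pattern_le.
Qed.
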